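(* Let $A\in s(3)$. Then $A$ is indivisible in $s(3)$ if and only if there exist $3\times3$ permutation matrices $P,Q$ such that $$P\operatorname{sgn}(A)Q=\begin{pmatrix}0&1&1\\1&0&1\\1&1&0\end{pmatrix}.$$
   Context: $s(3)$ denotes the set of $3\times 3$ real matrices with non-negative entries whose columns each sum to $1$, a monoid under matrix multiplication whose group of units is the set of permutation matrices. $\operatorname{sgn}$ is applied entrywise ($\operatorname{sgn}(x)=1$ for $x>0$, $\operatorname{sgn}(0)=0$). $A\in s(3)$ is indivisible if for every decomposition $A=BC$ with $B,C\in s(3)$ exactly one of $B,C$ is a permutation matrix. *)

From mathcomp Require Import all_boot all_order all_algebra.
From mathcomp Require Import reals.
Set Implicit Arguments. Unset Strict Implicit. Unset Printing Implicit Defensive.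
Import Order.TTheory GRing.Theory Num.Theory.
Local Open Scope ring_scope.

Definition stochastic (R : realType) (n : nat) (A : 'M[R]_n) : Prop :=
  (forall i j, 0 <= A i j) /\ (forall j, \sum_(i < n) A i j = 1).

Definition sgn_mx (R : realType) (n : nat) (A : 'M[R]_n) : 'M[R]_n :=
  map_mx (fun x => Num.sg x) A.

Definition indivisible (R : realType) (n : nat) (A : 'M[R]_n) : Prop :=
  forall B C : 'M[R]_n, stochastic B -> stochastic C -> A = B *m C ->
    (is_perm_mx B && ~~ is_perm_mx C) || (~~ is_perm_mx B && is_perm_mx C).

Definition J3 (R : realType) : 'M[R]_3 :=
  \matrix_(i < 3, j < 3) (i != j)%:R.

(* Everything is read off the column supports.  If the support of column j2
   of A lies in that of column j1, then A = B C where C is the identity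
   except that its column j1 is (1 - t) e_j1 + t e_j2, and B is A except that
   its column j1 is (A_j1 - t A_j2) / (1 - t).  For t below every positive
   entry of A_j1 both factors are stochastic and neither is a permutation.
   A permutation A = A 1 is divisible too.  Hence the column supports of an
   indivisible A form an antichain of nonempty subsets of a 3-set, that is,
   three distinct points (a permutation, excluded) or three distinct pairs,
   the pattern of J3.
   Conversely, let the column supports of A be the three pairs and A = B C.
   The support of column j of A is the union of the supports of the columns
   of B indexed by the support of column j of C, so the column supports of C
   form an antichain too.  Either C is a permutation, or its supports are
   pairs; then each column of B is supported on the single point common to
   two columns of A, and B is a permutation.  Not both, as A is not one. *)

From mathcomp Require Import all_boot all_order all_algebra all_fingroup.
From mathcomp Require Import reals ring lra.
Import Order.TTheory GRing.Theory Num.Theory.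
Set Implicit Arguments. Unset Strict Implicit. Unset Printing Implicit Defensive.

Lemma perm_family_of_inj n (F g : 'I_n -> {set 'I_n}) :
  injective F -> (forall j, exists x, F j = g x) ->
  exists s : 'S_n, forall j, F j = g (s j).
Proof.
move=> injF /fin_all_exists [f Ff].
have injf : injective f by move=> j k fjk; apply: injF; rewrite !Ff fjk.
by exists (perm injf) => j; rewrite permE.
Qed.

Lemma set1_family_of_bigcup_setC1 n (F : 'I_n -> {set 'I_n}) (c s : 'S_n) :
  (forall k, F k != set0) ->
  (forall j, \bigcup_(k in [set~ c j]) F k = [set~ s j]) ->
  forall k, F k = [set s ((c^-1)%g k)].
Proof.
move=> F_neq0 defF k; apply/eqP; rewrite eqEcard cards1 card_gt0 F_neq0 andbT.
apply/subsetP => y Fky; rewrite inE -{1}(permKV s y) (inj_eq perm_inj).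
rewrite -(canF_eq (permK c)); apply: contraT => cy_neq_k.
have : y \in [set~ s ((s^-1)%g y)].
  by rewrite -defF; apply/bigcupP; exists k; rewrite // !inE eq_sym.
by rewrite permKV setC11.
Qed.

Lemma subset_setC1 (T : finType) (X : {set T}) x : x \notin X -> X \subset [set~ x].
Proof. by move=> xX; apply/subsetP => y; rewrite !inE; apply: contraTneq => ->. Qed.

Section SubsetsOfOrd3.
Implicit Types (X : {set 'I_3}) (a : 'I_3 -> {set 'I_3}).

Lemma exists_other_ord3 (j k : 'I_3) : exists l : 'I_3, (l != j) && (l != k).
Proof.
have : [set j; k] \proper [set: 'I_3].
  by rewrite properEcard subsetT cardsT card_ord cards2; case: (j != k).
by case/properP => _ [l _]; rewrite !inE negb_or; exists l.
Qed.

Lemma card1_or_cardC1_ord3 X : X != set0 -> X != setT -> #|X| == 1 \/ #|~: X| == 1.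
Proof.
move=> X0 XT; have := cardsC X; rewrite card_ord.
have : 0 < #|~: X|.
  by rewrite card_gt0; apply: contra_neq XT => XC0; rewrite -[X]setCK XC0 setC0.
have : 0 < #|X| by rewrite card_gt0.
case: #|X| => [|[|k]] // _; first by left.
by case: #|~: X| => [|[|l]] // _; [right | rewrite !addSn !addnS].
Qed.

Lemma antichain_ord3 a : (forall j, a j != set0) ->
    (forall j k, a j \subset a k -> j = k) ->
  (exists s : 'S_3, forall j, a j = [set s j]) \/
  (exists s : 'S_3, forall j, a j = [set~ s j]).
Proof.
move=> a_neq0 anti.
have inj_a : injective a by move=> j k ajk; apply: anti; rewrite ajk.
have outside j k x : j != k -> a j = [set x] -> x \notin a k.
  by move=> jk ajx; apply: contra jk => xk; apply/eqP/anti; rewrite ajx sub1set.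
have shape j : #|a j| == 1 \/ #|~: a j| == 1.
  apply: card1_or_cardC1_ord3 => //; apply/eqP => ajT.
  have [k /andP [kj _]] := exists_other_ord3 j j.
  by case/negP: kj; apply/eqP/anti; rewrite ajT subsetT.
have cosingle j : #|~: a j| == 1 -> exists x, a j = [set~ x].
  by case/cards1P => x ajx; exists x; rewrite -ajx setCK.
have not_mixed j k : #|a j| == 1 -> #|~: a k| == 1 -> False.
  move=> /cards1P [x ajx] /cosingle [y aky].
  have jk : j != k.
    by apply/eqP => jk; move: (cardsC1 y); rewrite -aky -jk ajx cards1 card_ord.
  have xy : x = y by apply/eqP; move: (outside _ _ _ jk ajx); rewrite aky !inE negbK.
  have [l /andP [lj lk]] := exists_other_ord3 j k.
  case/negP: lk; apply/eqP/anti; rewrite aky -xy subset_setC1 //.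
  by apply: (outside _ _ _ _ ajx); rewrite eq_sym.
case: (boolP [forall j, #|a j| == 1]) => [/forallP all1 | /forallPn [j0 nj0]].
  by left; apply: (perm_family_of_inj (g := set1)) => // j; apply/cards1P.
right; apply: (perm_family_of_inj (g := fun x => [set~ x])) => // j; apply: cosingle.
have [aj1 | //] := shape j; case: (not_mixed j j0 aj1).
by have [aj01 | //] := shape j0; rewrite aj01 in nj0.
Qed.

End SubsetsOfOrd3.

Local Open Scope ring_scope.

Section ColumnSupports.
Variables (R : realType) (n : nat).
Implicit Types (A B C : 'M[R]_n).

Definition col_supp A (j : 'I_n) : {set 'I_n} := [set i | A i j != 0].

Lemma in_col_supp A i j : (i \in col_supp A j) = (A i j != 0).
Proof. by rewrite inE. Qed.

Lemma sum_mul_delta (F : 'I_n -> R) a : \sum_k F k * (k == a)%:R = F a.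
Proof. by rewrite (bigD1 a) //= eqxx mulr1 big1 ?addr0 // => k /negbTE ->; rewrite mulr0. Qed.

Lemma sum_delta (a : 'I_n) : \sum_k (k == a)%:R = 1 :> R.
Proof. by rewrite (bigD1 a) //= eqxx big1 ?addr0 // => k /negbTE ->. Qed.

Lemma stochastic_le1 A i j : stochastic A -> A i j <= 1.
Proof.
case=> A_ge0 sumA1; rewrite -(sumA1 j) (bigD1 i) //= lerDl.
by apply: sumr_ge0 => k _; apply: A_ge0.
Qed.

Lemma stochastic_col_supp_neq0 A j : stochastic A -> col_supp A j != set0.
Proof.
case=> A_ge0 sumA1; apply/set0Pn.
have [|i /andP [_ Aij]] :=
  @psumr_neq0P _ _ xpredT (fun i => A i j) (fun i _ => A_ge0 i j).
  by rewrite sumA1; apply/eqP; rewrite oner_eq0.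
by exists i; rewrite in_col_supp lt0r_neq0.
Qed.

Lemma stochastic_col_supp1 A j a : stochastic A -> col_supp A j = [set a] -> A a j = 1.
Proof.
case=> _ sumA1 Aja; rewrite -(sumA1 j) (bigD1 a) //= big1 ?addr0 // => i ia.
by apply/eqP; move: ia; rewrite -in_set1 -Aja in_col_supp negbK.
Qed.

Lemma col_supp_mulmx B C j : (forall i k, 0 <= B i k) -> (forall k j, 0 <= C k j) ->
  col_supp (B *m C) j = \bigcup_(k in col_supp C j) col_supp B k.
Proof.
move=> B_ge0 C_ge0; apply/setP => i.
rewrite in_col_supp mxE psumr_eq0 => [|k _]; last exact: mulr_ge0.
apply/allPn/bigcupP => [[k _]|[k]]; rewrite ?in_col_supp /= ?mulf_eq0 ?negb_or.
  by case/andP=> Bik Ckj; exists k; rewrite ?in_col_supp.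
by move=> Ckj Bik; exists k; rewrite ?mem_index_enum //= mulf_eq0 negb_or Bik.
Qed.

Lemma stochastic_perm_mxP B : stochastic B ->
  reflect (exists s : 'S_n, forall j, col_supp B j = [set s j]) (is_perm_mx B).
Proof.
move=> sB; apply: (iffP (is_perm_mxP B)) => [[s ->]|[s Bs]].
  exists (s^-1)%g => j; apply/setP => i.
  by rewrite in_col_supp inE !mxE pnatr_eq0 eqb0 negbK (canF_eq (permK s)).
exists (s^-1)%g; apply/matrixP => i j; rewrite !mxE (canF_eq (permKV s)).
have [->|ne] := eqVneq i (s j); first exact: stochastic_col_supp1 (Bs j).
by apply/eqP; move: ne; rewrite -in_set1 -Bs in_col_supp negbK.
Qed.

Lemma stochastic1 : stochastic (1%:M : 'M[R]_n).
Proof.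
split=> [i j|j]; first by rewrite mxE ler0n.
by under eq_bigr do rewrite mxE; exact: sum_delta.
Qed.

Section Splitting.
Variables (A : 'M[R]_n) (j1 j2 : 'I_n) (t : R).

Definition split_left : 'M[R]_n :=
  \matrix_(i, j) if j == j1 then (A i j1 - t * A i j2) / (1 - t) else A i j.

Definition split_right : 'M[R]_n :=
  \matrix_(k, j) if j == j1 then (1 - t) * (k == j1)%:R + t * (k == j2)%:R
                 else (k == j)%:R.

Lemma split_mulmx : t != 1 -> j1 != j2 -> split_left *m split_right = A.
Proof.
move=> t1 j12; apply/matrixP => i j; rewrite !mxE.
under eq_bigr do rewrite [split_right _ _]mxE.
have [->|jj1] := eqVneq j j1; last by rewrite sum_mul_delta mxE (negbTE jj1).
under eq_bigr do rewrite mulrDr !mulrA.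
rewrite big_split /= (sum_mul_delta (fun k => split_left i k * (1 - t))).
rewrite (sum_mul_delta (fun k => split_left i k * t)) !mxE eqxx eq_sym (negbTE j12).
by field; rewrite subr_eq0 eq_sym t1.
Qed.

Lemma stochastic_split_right : 0 <= t <= 1 -> stochastic split_right.
Proof.
case/andP=> t_ge0 t_le1; split=> [k j|j]; rewrite ?mxE.
  case: ifP => _; last exact: ler0n.
  by apply: addr_ge0; apply: mulr_ge0; rewrite ?ler0n ?subr_ge0.
under eq_bigr do rewrite mxE.
case: (j == j1); last exact: sum_delta.
by rewrite big_split /= -!mulr_sumr !sum_delta !mulr1 subrK.
Qed.

Lemma stochastic_split_left : stochastic A -> t < 1 ->
  (forall i, A i j2 != 0 -> t < A i j1) -> stochastic split_left.
Proof.
move=> sA t_lt1 t_lt; have [A_ge0 sumA1] := sA; split=> [i j|j]; rewrite ?mxE.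
  case: ifP => _ //; apply: divr_ge0; last by rewrite subr_ge0 ltW.
  rewrite subr_ge0; have [->|nz] := eqVneq (A i j2) 0; first by rewrite mulr0.
  have := stochastic_le1 i j2 sA; have := t_lt i nz; have := A_ge0 i j2.
  have := A_ge0 i j1; case: (lerP 0 t); nra.
under eq_bigr do rewrite mxE.
case: (j == j1); last exact: sumA1.
rewrite -mulr_suml sumrB -mulr_sumr !sumA1.
by field; rewrite subr_eq0 eq_sym lt_eqF.
Qed.

Lemma split_right_not_perm : 0 < t < 1 -> j1 != j2 -> ~~ is_perm_mx split_right.
Proof.
case/andP=> t_gt0 t_lt1 j12; apply/negP => /is_perm_mxP [s /matrixP /(_ j2 j1)].
rewrite !mxE !eqxx eq_sym (negbTE j12) mulr0 add0r mulr1 => t_nat.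
by move: t_gt0 t_lt1; rewrite t_nat ltr0n ltrn1; case: (s j2 == j1).
Qed.

Lemma split_left_not_perm : t < 1 -> j1 != j2 ->
  (forall i, A i j2 != 0 -> t < A i j1) -> ~~ is_perm_mx split_left.
Proof.
move=> t_lt1 j12 t_lt; apply/negP => /is_perm_mxP [s /matrixP Bs].
set a := (s^-1)%g j2.
have Aaj2 : A a j2 = 1.
  by move: (Bs a j2); rewrite !mxE eq_sym (negbTE j12) permKV eqxx /= mulr1n.
have := Bs a j1; rewrite !mxE eqxx permKV eq_sym (negbTE j12) /= mulr0n Aaj2 mulr1.
move/eqP; rewrite mulf_eq0 invr_eq0 !subr_eq0.
have := t_lt a; rewrite Aaj2 oner_eq0 => /(_ isT) t_lt_Aaj1.
by case/orP => /eqP e; lra.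
Qed.

End Splitting.

Lemma col_supp_subset_factorization A j1 j2 : stochastic A -> j1 != j2 ->
    col_supp A j2 \subset col_supp A j1 ->
  exists B C, [/\ stochastic B, stochastic C, A = B *m C,
                  ~~ is_perm_mx B & ~~ is_perm_mx C].
Proof.
move=> sA j12 sub.
have [t [t_gt0 t_lt1 t_lt]] :
    exists t, [/\ 0 < t, t < 1 & forall i, A i j2 != 0 -> t < A i j1].
  pose m := \big[Num.min/1]_(i in col_supp A j1) A i j1.
  have m_gt0 : 0 < m.
    apply/bigmin_gtP; split=> // i; rewrite in_col_supp lt0r => ->.
    by case: sA => A_ge0 _; rewrite A_ge0.
  have m_le1 : m <= 1 by apply: bigmin_le_id.
  exists (m / 2); split=> [||i Ai]; try lra.
  have : m <= A i j1 by apply: bigmin_le_cond; apply: (subsetP sub); rewrite in_col_supp.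
  lra.
exists (split_left A j1 j2 t), (split_right j1 j2 t); split.
- exact: stochastic_split_left.
- by apply: stochastic_split_right; rewrite !ltW.
- by rewrite split_mulmx // lt_eqF.
- exact: split_left_not_perm.
- by apply: split_right_not_perm => //; apply/andP.
Qed.

Lemma indivisible_not_perm_mx A : stochastic A -> indivisible A -> ~~ is_perm_mx A.
Proof.
move=> sA indA; apply/negP => pA.
by have := indA A 1%:M sA stochastic1 (esym (mulmx1 A)); rewrite pA is_perm_mx1.
Qed.

Lemma indivisible_col_supp_antichain A : stochastic A -> indivisible A ->
  forall j k, col_supp A j \subset col_supp A k -> j = k.
Proof.
move=> sA indA j k sub; apply/eqP; rewrite eq_sym; apply: contraT => kj.
have [B [C [sB sC defA nB nC]]] := col_supp_subset_factorization sA kj sub.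
by have := indA B C sB sC defA; rewrite (negbTE nB) (negbTE nC).
Qed.

End ColumnSupports.

Section Order3.
Variable R : realType.
Implicit Type A : 'M[R]_3.

Lemma set1_neq_setC1 (x y : 'I_3) : [set x] != [set~ y].
Proof. by apply/eqP => e; move: (cardsC1 y); rewrite -e cards1 card_ord. Qed.

Lemma J3_sgn_perm_mxP A : (forall i j, 0 <= A i j) ->
  (exists P Q : 'M[R]_3, is_perm_mx P /\ is_perm_mx Q /\ P *m sgn_mx A *m Q = J3 R) <->
  exists s : 'S_3, forall j, col_supp A j = [set~ s j].
Proof.
move=> A_ge0; split=> [[_ [_ [/is_perm_mxP [p ->] [/is_perm_mxP [q ->]]]]] | [s As]].
  rewrite -[q]invgK -col_permE -row_permE => /matrixP PAQ.
  exists (q * p)%g => j; apply/setP => i.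
  have := PAQ ((p^-1)%g i) (q j); rewrite /J3 !mxE permKV permK.
  rewrite in_col_supp !inE -sgr_eq0 => ->; rewrite pnatr_eq0 eqb0 negbK permM.
  by rewrite (canF_eq (permKV p)).
exists 1%:M, (perm_mx s); do !split; rewrite ?is_perm_mx1 ?perm_mx_is_perm //.
rewrite mul1mx -[s]invgK -col_permE; apply/matrixP => i j; rewrite /J3 !mxE.
have := As ((s^-1)%g j); move/setP/(_ i); rewrite in_col_supp !inE permKV.
have [->|ne] := eqVneq (A i ((s^-1)%g j)) 0; first by rewrite sgr0 => <-.
by move=> <-; rewrite gtr0_sg // lt0r ne A_ge0.
Qed.

Lemma setC1_col_supp_indivisible A (s : 'S_3) : stochastic A ->
  (forall j, col_supp A j = [set~ s j]) -> indivisible A.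
Proof.
move=> sA As B C sB sC defA.
have [B_ge0 _] := sB; have [C_ge0 _] := sC.
have supp_A j : \bigcup_(k in col_supp C j) col_supp B k = [set~ s j].
  by rewrite -col_supp_mulmx // -defA.
have not_both : ~~ (is_perm_mx B && is_perm_mx C).
  apply/andP => -[/(stochastic_perm_mxP sB) [b Bb] /(stochastic_perm_mxP sC) [c Cc]].
  by have := supp_A ord0; rewrite Cc big_set1 Bb; apply/eqP/set1_neq_setC1.
have C_anti j k : col_supp C j \subset col_supp C k -> j = k.
  move=> sub; apply: (@perm_inj _ s); apply/eqP; rewrite eq_sym -in_set1 -sub1set -setCS.
  rewrite -!supp_A; apply/bigcupsP => l lj; apply: bigcup_sup; exact: (subsetP sub).
have C_neq0 j := stochastic_col_supp_neq0 j sC.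
have [[c Cc] | [c Cc]] := antichain_ord3 C_neq0 C_anti.
  have pC : is_perm_mx C by apply/(stochastic_perm_mxP sC); exists c.
  by move: not_both; rewrite pC andbT => /negbTE ->.
have pB : is_perm_mx B.
  apply/(stochastic_perm_mxP sB); exists ((c^-1)%g * s)%g => k; rewrite permM.
  apply: set1_family_of_bigcup_setC1 => [l|j]; first exact: stochastic_col_supp_neq0.
  by rewrite -Cc supp_A.
by move: not_both; rewrite pB /= => /negbTE ->.
Qed.

End Order3.

Theorem theorem1 (R : realType) (A : 'M[R]_3) :
  stochastic A ->
  (indivisible A <->
   exists P Q : 'M[R]_3, is_perm_mx P /\ is_perm_mx Q /\
     P *m sgn_mx A *m Q = J3 R).
Proof.
move=> sA; have [A_ge0 _] := sA; rewrite (J3_sgn_perm_mxP A_ge0).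
split=> [indA | [s As]]; last exact: setC1_col_supp_indivisible As.
have [[s As] | //] := antichain_ord3 (fun j => stochastic_col_supp_neq0 j sA)
                                  (indivisible_col_supp_antichain sA indA).
case/negP: (indivisible_not_perm_mx sA indA).
by apply/(stochastic_perm_mxP sA); exists s.
Qed.
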